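(* Let $x<w$ in $W$ and let $\mathfrak w=s_1\cdots s_n$ be a reduced word of $w$ which is a good word for $x$, with $\lambda_{x,\mathfrak w}=(i_1,\ldots,i_d)$ and $i_1>1$. Then: (i) $x\not\le s_1w$; (ii) $S(s_1x,s_1w)=S(x,w)$; (iii) the reduced word $s_1\mathfrak w:=s_2\cdots s_n$ of $s_1w$ is a good word for $s_1x$, and $\lambda_{s_1x,s_1\mathfrak w}=(i_1-1,\ldots,i_d-1)$ (positions in $s_2\cdots s_n$ being numbered $1,\ldots,n-1$).
   Context: Let $W$ be the Weyl group of a finite reduced root system $\Phi$ with positive roots $\Phi_+$ and simple reflections $S$; $\ell$ is the length and $\le$ the Bruhat order. For $x\le w$ put $S(x,w)=\{\alpha\in\Phi_+ : x\le ws_\alpha<w\}$. For a reduced word $\mathfrak w=s_1\cdots s_n$ of $w$ ($s_i\in S$), let $\lambda_{x,\mathfrak w}$ be the set of $i\in\{1,\ldots,n\}$ such that $x\le s_1\cdots\widehat{s_i}\cdots s_n$ (the Weyl group element obtained by omitting $s_i$), written as the increasing tuple $(i_1,\ldots,i_d)$, $i_1<\cdots<i_d$. The word $\mathfrak w$ is called a good word for $x$ if $x=s_1\cdots\widehat{s_{i_1}}\cdots\widehat{s_{i_d}}\cdots s_n$ (omitting exactly the positions in $\lambda_{x,\mathfrak w}$). *)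

(* Weyl group of a finite reduced (crystallographic) root system,
   realized concretely as a group of matrices over an ordered field R. *)
From HB Require Import structures.
From mathcomp Require Import all_boot all_order all_algebra.
From Stdlib Require Import Relations.Relation_Operators.
Set Implicit Arguments. Unset Strict Implicit. Unset Printing Implicit Defensive.
Import Order.TTheory GRing.Theory Num.Theory.
Local Open Scope ring_scope.

Section WeylGroup.
Variables (R : realFieldType) (n : nat).

Definition dotv (u v : 'rV[R]_n) : R := (u *m v^T) 0 0.

(* the orthogonal reflection s_a (acting on column vectors M *m v;
   it is a symmetric matrix, so also v *m s_a on row vectors) *)
Definition refl (a : 'rV[R]_n) : 'M[R]_n :=
  1%:M - (2 / dotv a a) *: (a^T *m a).

Definition is_root_system (Phi : seq 'rV[R]_n) : Prop :=
  [/\ 0 \notin Phi,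
      (forall a b, a \in Phi -> b \in Phi -> b *m refl a \in Phi),
      (forall a b, a \in Phi -> b \in Phi ->
         exists z : int, 2 * dotv b a / dotv a a = z%:~R) &
      (forall a (c : R), a \in Phi -> c *: a \in Phi -> c = 1 \/ c = -1)].

Variables (Phi : seq 'rV[R]_n) (rho : 'rV[R]_n).

(* rho is regular: defines the positive system Phi_+ = {a in Phi | (a,rho) > 0} *)
Definition regular : Prop := forall a, a \in Phi -> dotv a rho != 0.

Definition pos_root (a : 'rV[R]_n) : Prop := a \in Phi /\ 0 < dotv a rho.

Definition simple_root (a : 'rV[R]_n) : Prop :=
  pos_root a /\ ~ (exists b c, pos_root b /\ pos_root c /\ a = b + c).

(* words in the simple reflections: a word is a list of simple roots *)
Definition simple_word (ws : seq 'rV[R]_n) : Prop :=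
  forall a, a \in ws -> simple_root a.

Definition wordval (ws : seq 'rV[R]_n) : 'M[R]_n :=
  foldr (fun a M => refl a *m M) 1%:M ws.

Definition inW (M : 'M[R]_n) : Prop :=
  exists ws, simple_word ws /\ wordval ws = M.

Definition length_is (M : 'M[R]_n) (k : nat) : Prop :=
  (exists ws, simple_word ws /\ wordval ws = M /\ size ws = k) /\
  (forall ws, simple_word ws -> wordval ws = M -> (k <= size ws)%N).

Definition reduced_word (ws : seq 'rV[R]_n) : Prop :=
  simple_word ws /\
  forall ws', simple_word ws' -> wordval ws' = wordval ws -> (size ws <= size ws')%N.

Definition bruhat_step (x y : 'M[R]_n) : Prop :=
  exists a, a \in Phi /\ y = x *m refl a /\
    exists kx ky, length_is x kx /\ length_is y ky /\ (kx < ky)%N.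

Definition bruhat_le (x y : 'M[R]_n) : Prop :=
  inW x /\ clos_refl_trans _ bruhat_step x y.

Definition bruhat_lt (x y : 'M[R]_n) : Prop := bruhat_le x y /\ x <> y.

Definition Sxw (x w : 'M[R]_n) (a : 'rV[R]_n) : Prop :=
  pos_root a /\ bruhat_le x (w *m refl a) /\ bruhat_lt (w *m refl a) w.

(* the word with position i (1-based) omitted *)
Definition omit1 (i : nat) (ws : seq 'rV[R]_n) : seq 'rV[R]_n :=
  take i.-1 ws ++ drop i ws.

(* the word with all positions (1-based) in l omitted *)
Definition omit_pos (l : seq nat) (ws : seq 'rV[R]_n) : seq 'rV[R]_n :=
  mask [seq (i.+1 \notin l) | i <- iota 0 (size ws)] ws.

(* l is lambda_{x,ws}, written as an increasing tuple *)
Definition is_lambda (x : 'M[R]_n) (ws : seq 'rV[R]_n) (l : seq nat) : Prop :=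
  sorted ltn l /\
  forall i, i \in l <-> ((1 <= i <= size ws)%N /\ bruhat_le x (wordval (omit1 i ws))).

Definition good_word (x : 'M[R]_n) (ws : seq 'rV[R]_n) : Prop :=
  exists l, is_lambda x ws l /\ x = wordval (omit_pos l ws).

End WeylGroup.

From HB Require Import structures.
From mathcomp Require Import all_boot all_order all_algebra.
From Stdlib Require Import Classical ClassicalEpsilon Wf_nat Relations.
From mathcomp Require Import zify ring lra.
Import Order.TTheory GRing.Theory Num.Theory.
Local Open Scope ring_scope.
Set Implicit Arguments. Unset Strict Implicit. Unset Printing Implicit Defensive.

(* The root system gives the Weyl group its combinatorics: every positive root is a
   sum of simple roots, a simple reflection s_a permutes the positive roots other than a,
   and this yields the exchange condition, hence the subword property of the Bruhat
   order, Deodhar's property Z and the lifting property.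
   Write w = s_1 w'. As 1 is not in lambda, x is not below w' = s_1 w, so the lifting
   property forces s_1 to be a left descent of x. For v a subword of w' obtained by
   omitting one letter, property Z (when s_1 v > v) or the lifting property (when
   s_1 v < v) gives x <= s_1 v iff s_1 x <= v; this shifts lambda down by one, and,
   lambda being determined by x, transports the good-word identity. The same dichotomy
   applied to w s_b gives S(s_1 x, s_1 w) = S(x, w). *)

Section Reflections.
Variables (R : realFieldType) (n : nat).
Implicit Types (u v a b : 'rV[R]_n) (M N g h : 'M[R]_n).

Lemma dotvC u v : dotv u v = dotv v u.
Proof. rewrite /dotv !mxE; apply: eq_bigr => j _; by rewrite !mxE mulrC. Qed.

Lemma dotvDl u v b : dotv (u + v) b = dotv u b + dotv v b.
Proof. by rewrite /dotv mulmxDl mxE. Qed.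

Lemma dotvZl c u b : dotv (c *: u) b = c * dotv u b.
Proof. by rewrite /dotv -scalemxAl mxE. Qed.

Lemma dotvNl u b : dotv (- u) b = - dotv u b.
Proof. by rewrite /dotv mulNmx mxE. Qed.

Lemma dotvBl u v b : dotv (u - v) b = dotv u b - dotv v b.
Proof. by rewrite dotvDl dotvNl. Qed.

Lemma dotv_suml (s : seq 'rV[R]_n) b :
  dotv (\sum_(c <- s) c) b = \sum_(c <- s) dotv c b.
Proof.
elim: s => [|c s IH]; first by rewrite !big_nil /dotv mul0mx mxE.
by rewrite !big_cons dotvDl IH.
Qed.

Lemma dotv_ge0 u : 0 <= dotv u u.
Proof. rewrite /dotv mxE; apply: sumr_ge0 => j _; rewrite mxE; exact: sqr_ge0. Qed.

Lemma dotv_eq0 u : (dotv u u == 0) = (u == 0).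
Proof.
apply/idP/idP; last by move/eqP->; rewrite /dotv mul0mx mxE.
rewrite /dotv mxE psumr_eq0 => [H|j _]; last by rewrite mxE sqr_ge0.
apply/eqP/rowP => j; rewrite mxE.
by have := allP H j (mem_index_enum _); rewrite /= mxE -expr2 sqrf_eq0 => /eqP.
Qed.

Lemma dotv_mulmx u v M : dotv (u *m M) v = dotv u (v *m M^T).
Proof. by rewrite /dotv trmx_mul trmxK mulmxA. Qed.

Lemma dotv_sub_scale (x y : R) u v :
  dotv (x *: u - y *: v) (x *: u - y *: v) =
  x ^+ 2 * dotv u u - 2 * x * y * dotv u v + y ^+ 2 * dotv v v.
Proof.
rewrite !dotvBl ![dotv _ (_ - _)]dotvC !dotvBl !dotvZl ![dotv _ (_ *: _)]dotvC.
by rewrite !dotvZl [dotv v u]dotvC; ring.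
Qed.

Lemma refl_row b a : b *m refl a = b - (2 * dotv b a / dotv a a) *: a.
Proof.
rewrite /refl mulmxBr mulmx1 -scalemxAr mulmxA [b *m a^T]mx11_scalar.
by rewrite mul_scalar_mx scalerA mulrAC.
Qed.

Lemma row_mx_ext M N : (forall b : 'rV[R]_n, b *m M = b *m N) -> M = N.
Proof.
by move=> H; apply/row_matrixP => i; rewrite -(mul1mx M) -(mul1mx N) !row_mul H.
Qed.

Lemma trmx_refl a : (refl a)^T = refl a.
Proof. by rewrite /refl linearB /= trmx1 linearZ /= trmx_mul trmxK. Qed.

Lemma refl_self a : a != 0 -> a *m refl a = - a.
Proof.
move=> a0; rewrite refl_row mulfK ?dotv_eq0 // scaler_nat mulr2n.
by rewrite opprD addrA subrr add0r.
Qed.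

Lemma reflK a : a != 0 -> refl a *m refl a = 1%:M.
Proof.
move=> a0; apply: row_mx_ext => b; rewrite mulmx1 mulmxA [X in X = _]refl_row.
have -> : dotv (b *m refl a) a = - dotv b a.
  by rewrite dotv_mulmx trmx_refl refl_self // dotvC dotvNl dotvC.
by rewrite refl_row mulrN mulNr scaleNr opprK subrK.
Qed.

Lemma reflN a : refl (- a) = refl a.
Proof.
apply: row_mx_ext => b; rewrite !refl_row.
rewrite [dotv b (-a)]dotvC !dotvNl [dotv a (-a)]dotvC dotvNl opprK.
by rewrite mulrN mulNr scaleNr scalerN opprK dotvC.
Qed.

Definition orthogonal_mx g := g *m g^T = 1%:M /\ g^T *m g = 1%:M.

Lemma orthogonal_mx1 : orthogonal_mx 1%:M.
Proof. by rewrite /orthogonal_mx trmx1 mulmx1. Qed.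

Lemma orthogonal_refl a : a != 0 -> orthogonal_mx (refl a).
Proof. by move=> a0; rewrite /orthogonal_mx trmx_refl reflK. Qed.

Lemma orthogonal_mxM g h :
  orthogonal_mx g -> orthogonal_mx h -> orthogonal_mx (g *m h).
Proof.
move=> [g1 g2] [h1 h2]; split; rewrite trmx_mul.
  by rewrite mulmxA -(mulmxA g) h1 mulmx1 g1.
by rewrite mulmxA -(mulmxA _ g^T) g2 mulmx1 h2.
Qed.

Lemma dotv_orthogonal u v g :
  orthogonal_mx g -> dotv (u *m g) (v *m g) = dotv u v.
Proof. by move=> [g1 _]; rewrite /dotv trmx_mul mulmxA -(mulmxA u) g1 mulmx1. Qed.

Lemma refl_conj b g : orthogonal_mx g -> refl (b *m g) = g^T *m refl b *m g.
Proof.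
move=> og; have [_ g2] := og.
rewrite /refl dotv_orthogonal // mulmxBr mulmx1 mulmxBl g2 -scalemxAr -scalemxAl.
by rewrite trmx_mul !mulmxA.
Qed.

End Reflections.

Lemma count_lt_subpred (T : eqType) (p q : pred T) (s : seq T) x :
  subpred p q -> x \in s -> q x -> ~~ p x -> (count p s < count q s)%N.
Proof.
move=> pq; elim: s => //= y s IH; rewrite inE => /orP[/eqP<- qx px|xs qx px].
  by rewrite qx (negbTE px) add0n add1n ltnS sub_count.
rewrite -addnS leq_add ?IH //; have := pq y.
by case: (p y) => // /(_ isT) ->.
Qed.

Lemma subseq_consP (T : eqType) (s1 s2 : seq T) x : subseq s1 (x :: s2) ->
  subseq s1 s2 \/ exists2 s1', s1 = x :: s1' & subseq s1' s2.
Proof.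
case: s1 => [|y s1] /=; first by left; exact: sub0seq.
by case: eqP => [-> sub|_ sub]; [right; exists s1|left].
Qed.

Section RootSystem.
Variables (R : realFieldType) (n : nat) (Phi : seq 'rV[R]_n) (rho : 'rV[R]_n).
Hypothesis hPhi : is_root_system Phi.
Hypothesis hrho : regular Phi rho.
Implicit Types (a b c : 'rV[R]_n) (g h : 'M[R]_n) (ws L : seq 'rV[R]_n).

Local Notation pos := (pos_root Phi rho).
Local Notation simple := (simple_root Phi rho).
Local Notation sword := (simple_word Phi rho).
Local Notation inW := (inW Phi rho).

Lemma root_neq0 a : a \in Phi -> a != 0.
Proof. by case: hPhi => H _ _ _ aP; apply: contraNneq H => <-. Qed.

Lemma root_refl a b : a \in Phi -> b \in Phi -> b *m refl a \in Phi.
Proof. by case: hPhi => _ H _ _; apply: H. Qed.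

Lemma rootN a : a \in Phi -> - a \in Phi.
Proof. by move=> aP; rewrite -refl_self ?root_neq0 // root_refl. Qed.

Lemma dotv_root_gt0 a : a \in Phi -> 0 < dotv a a.
Proof. by move=> aP; rewrite lt_def dotv_eq0 root_neq0 ?dotv_ge0. Qed.

Lemma root_reflK a g : a \in Phi -> refl a *m (refl a *m g) = g.
Proof. by move=> aP; rewrite mulmxA reflK ?root_neq0 // mul1mx. Qed.

Lemma pos_rootVN a : a \in Phi -> pos a \/ pos (- a).
Proof.
move=> aP; rewrite /pos_root dotvNl oppr_gt0 rootN //.
by have := hrho aP; rewrite neq_lt => /orP[H|H]; [right|left]; split.
Qed.

Lemma pos_rootN a : pos a -> ~ pos (- a).
Proof. by move=> [_ H] [_]; rewrite dotvNl oppr_gt0 ltNge (ltW H). Qed.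

Lemma simple_pos a : simple a -> pos a.
Proof. by case. Qed.

Lemma simple_root_in a : simple a -> a \in Phi.
Proof. by case=> [[]]. Qed.

Lemma simple_word_cons a ws : sword (a :: ws) <-> simple a /\ sword ws.
Proof.
split; first by move=> H; split=> [|c cP]; apply: H; rewrite inE ?eqxx ?cP ?orbT.
by move=> [Ha Hw] c; rewrite inE => /orP[/eqP->|/Hw].
Qed.

Lemma simple_word_cat ws1 ws2 : sword ws1 -> sword ws2 -> sword (ws1 ++ ws2).
Proof. by move=> H1 H2 c; rewrite mem_cat => /orP[/H1|/H2]. Qed.

Lemma simple_word_subseq ws1 ws2 : subseq ws1 ws2 -> sword ws2 -> sword ws1.
Proof. by move=> /mem_subseq sub H c /sub /H. Qed.

Lemma simple_word_rev ws : sword ws -> sword (rev ws).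
Proof. by move=> H c; rewrite mem_rev => /H. Qed.

Lemma wordval_cons a ws : wordval (a :: ws) = refl a *m wordval ws.
Proof. by []. Qed.

Lemma wordval_cat ws1 ws2 : wordval (ws1 ++ ws2) = wordval ws1 *m wordval ws2.
Proof. by elim: ws1 => [|a ws IH] /=; rewrite ?mul1mx // IH mulmxA. Qed.

Lemma wordval_rev ws : wordval (rev ws) = (wordval ws)^T.
Proof.
elim: ws => [|a ws IH] /=; first by rewrite trmx1.
by rewrite rev_cons -cats1 wordval_cat IH /= mulmx1 trmx_mul trmx_refl.
Qed.

Lemma wordval_orthogonal ws : sword ws -> orthogonal_mx (wordval ws).
Proof.
elim: ws => [|a ws IH] /=; first by move=> _; exact: orthogonal_mx1.
move=> /simple_word_cons [sa Sw]; apply: orthogonal_mxM (IH Sw).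
exact/orthogonal_refl/root_neq0/simple_root_in.
Qed.

Lemma root_mul_wordval ws b : sword ws -> b \in Phi -> b *m wordval ws \in Phi.
Proof.
elim: ws b => [|a ws IH] b /=; first by rewrite mulmx1.
move=> /simple_word_cons [sa Sw] bP; rewrite mulmxA; apply: IH => //.
exact/root_refl/bP/simple_root_in.
Qed.

Lemma inW_word ws : sword ws -> inW (wordval ws).
Proof. by move=> Sw; exists ws. Qed.

Lemma inW_orthogonal g : inW g -> orthogonal_mx g.
Proof. by move=> [ws [Sw <-]]; exact: wordval_orthogonal. Qed.

Lemma root_mul_inW g b : inW g -> b \in Phi -> b *m g \in Phi.
Proof. by move=> [ws [Sw <-]]; exact: root_mul_wordval. Qed.

Lemma inWM g h : inW g -> inW h -> inW (g *m h).
Proof.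
move=> [ws1 [S1 <-]] [ws2 [S2 <-]].
by exists (ws1 ++ ws2); rewrite wordval_cat; split => //; apply: simple_word_cat.
Qed.

Lemma inWT g : inW g -> inW g^T.
Proof.
move=> [ws [Sw <-]]; exists (rev ws).
by rewrite wordval_rev; split => //; apply: simple_word_rev.
Qed.

Lemma inW_refl_simple a : simple a -> inW (refl a).
Proof. by move=> sa; exists [:: a]; rewrite /= mulmx1; split => //; apply/simple_word_cons.
Qed.

Lemma inW_refl_simpleM a g : simple a -> inW g -> inW (refl a *m g).
Proof. by move=> sa; apply: inWM; apply: inW_refl_simple. Qed.

Definition lower_roots b := count (fun c => dotv c rho < dotv b rho) Phi.

Lemma lower_roots_lt b c : c \in Phi -> dotv c rho < dotv b rho ->
  (lower_roots c < lower_roots b)%N.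
Proof.
move=> cP cb; apply: (count_lt_subpred _ cP) => //; last by rewrite /= ltxx.
by move=> y /= yc; apply: lt_trans yc cb.
Qed.

Lemma pos_root_sum_simple b : pos b ->
  exists L, [/\ sword L, L != [::] & b = \sum_(c <- L) c].
Proof.
have [k] : exists k, (lower_roots b < k)%N by exists (lower_roots b).+1.
elim: k b => // k IH b Hk pb.
have [sb|] := classic (simple b).
  exists [:: b]; split => //; first exact/simple_word_cons.
  by rewrite big_seq1.
move=> /not_and_or [//|/NNPP [c [d [pc [pd Eb]]]]]; subst b.
have [cP dP] := (proj1 pc, proj1 pd).
have ltc : dotv c rho < dotv (c + d) rho by rewrite dotvDl ltrDl; case: pd.
have ltd : dotv d rho < dotv (c + d) rho by rewrite dotvDl ltrDr; case: pc.
have [Lc [Sc _ ->]] := IH c (leq_trans (lower_roots_lt cP ltc) Hk) pc.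
have [Ld [Sd Nd ->]] := IH d (leq_trans (lower_roots_lt dP ltd) Hk) pd.
exists (Lc ++ Ld); split; first exact: simple_word_cat.
  by case: (Lc) Nd.
by rewrite big_cat.
Qed.

(* Equality in Cauchy-Schwarz would make a and c proportional, which reducedness forbids. *)
Lemma pos_root_cauchy_schwarz_lt a c : pos a -> pos c -> a != c ->
  dotv a c ^+ 2 < dotv a a * dotv c c.
Proof.
move=> pa pc ac; rewrite ltNge; apply/negP => H.
have aa0 := dotv_root_gt0 (proj1 pa); have cc0 := dotv_root_gt0 (proj1 pc).
set v := dotv c c *: a - dotv a c *: c.
have : dotv v v <= 0 by rewrite /v dotv_sub_scale; nra.
rewrite le_eqVlt ltNge dotv_ge0 orbF dotv_eq0 subr_eq0 => /eqP E.
have Ea : a = (dotv a c / dotv c c) *: c.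
  by rewrite mulrC -scalerA -E scalerA mulVf ?scale1r // gt_eqF.
have : (dotv a c / dotv c c) *: c \in Phi by rewrite -Ea; case: pa.
case: hPhi => _ _ _ Hred /(Hred _ _ (proj1 pc)) [] Ec; rewrite Ec in Ea.
  by move: ac; rewrite Ea scale1r eqxx.
by apply: (pos_rootN pc); rewrite -scaleN1r -Ea.
Qed.

Lemma simple_refl_neq_sub a c : simple a -> simple c -> a *m refl c != a - c.
Proof.
move=> sa sc; apply/eqP => E.
have acP : a - c \in Phi by rewrite -E root_refl ?simple_root_in.
case: (pos_rootVN acP) => H.
  by case: sa => _; apply; exists (a - c), c; split => //; split; [case: sc|rewrite subrK].
case: sc => _; apply; exists (- (a - c)), a; split => //; split; first by case: sa.
by rewrite opprB subrK.
Qed.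

(* The Cartan integers of a and c are positive with product < 4, so one of them is 1;
   then s_c a = a - c (or s_a c = c - a) would decompose a simple root. *)
Lemma simple_dotv_le0 a c : simple a -> simple c -> a != c -> dotv a c <= 0.
Proof.
move=> sa sc ac; rewrite leNgt; apply/negP => H.
have [pa pc] := (simple_pos sa, simple_pos sc).
have aa0 := dotv_root_gt0 (proj1 pa); have cc0 := dotv_root_gt0 (proj1 pc).
case: hPhi => _ _ Hint _.
have [z1 Hz1] := Hint c a (proj1 pc) (proj1 pa).
have [z2 Hz2] := Hint a c (proj1 pa) (proj1 pc).
have z1p : (0 < z1)%R by rewrite -(ltr0z R) -Hz1 divr_gt0 // mulr_gt0.
have z2p : (0 < z2)%R by rewrite -(ltr0z R) -Hz2 divr_gt0 // mulr_gt0 // dotvC.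
have z12 : (z1 * z2 < 4)%R.
  rewrite -(ltr_int R) intrM -Hz1 -Hz2 [dotv c a]dotvC.
  have -> : 2 * dotv a c / dotv c c * (2 * dotv a c / dotv a a) =
            4 * (dotv a c ^+ 2 / (dotv a a * dotv c c)).
    by field; rewrite ?gt_eqF.
  rewrite -[X in _ < X]mulr1 ltr_pM2l // ltr_pdivrMr ?mul1r ?mulr_gt0 //.
  exact: pos_root_cauchy_schwarz_lt.
have [e1|e2] : z1 = 1%R \/ z2 = 1%R by lia.
  by have/eqP[] := simple_refl_neq_sub sa sc; rewrite refl_row Hz1 e1 scale1r.
by have/eqP[] := simple_refl_neq_sub sc sa; rewrite refl_row Hz2 e2 scale1r.
Qed.

Lemma sum_count_filter a L : \sum_(c <- L) c =
  (count_mem a L)%:R *: a + \sum_(c <- filter (predC1 a) L) c.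
Proof.
elim: L => [|c L IH] /=; first by rewrite !big_nil scale0r addr0.
rewrite big_cons IH; case: eqP => [->|_] /=.
  by rewrite add1n mulrS scalerDl scale1r addrA.
by rewrite add0n big_cons addrCA.
Qed.

Lemma sum_simple_rho_ge0 L : sword L -> 0 <= dotv (\sum_(c <- L) c) rho.
Proof.
move=> SL; rewrite dotv_suml big_seq; apply: sumr_ge0 => c /SL [[_ H] _].
exact: ltW.
Qed.

Lemma sum_simple_rho_gt0 L : sword L -> L != [::] -> 0 < dotv (\sum_(c <- L) c) rho.
Proof.
case: L => [|c L] // /simple_word_cons [[[_ pc] _] SL] _.
by rewrite big_cons dotvDl ltr_wpDr // sum_simple_rho_ge0.
Qed.

Lemma sum_simple_filter_dotv_le0 a L : simple a -> sword L ->
  dotv (\sum_(c <- filter (predC1 a) L) c) a <= 0.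
Proof.
move=> sa SL; rewrite dotv_suml big_seq; apply: sumr_le0 => c.
rewrite mem_filter => /andP[ca /SL sc]; exact: simple_dotv_le0.
Qed.

Lemma simple_word_filter a L : sword L -> sword (filter (predC1 a) L).
Proof. by move=> SL c; rewrite mem_filter => /andP[_ /SL]. Qed.

(* Write b and -s_a b as sums of simple roots; the non-a parts add up to a
   nonpositive multiple t of a, which forces them to vanish, so b is a multiple of a. *)
Lemma simple_refl_pos a b : simple a -> pos b -> b != a -> pos (b *m refl a).
Proof.
move=> sa pb ba; have [aP bP] := (simple_root_in sa, proj1 pb).
case: (pos_rootVN (root_refl aP bP)) => // H; exfalso.
have [L1 [S1 N1 E1]] := pos_root_sum_simple pb.
have [L2 [S2 _ E2]] := pos_root_sum_simple H.
set k := 2 * dotv b a / dotv a a.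
rewrite refl_row opprB (sum_count_filter a) in E2.
rewrite (sum_count_filter a) in E1.
set m1 := (count_mem a L1)%:R in E1; set m2 := (count_mem a L2)%:R in E2.
set F1 := filter (predC1 a) L1 in E1; set F2 := filter (predC1 a) L2 in E2.
set t := k - m1 - m2.
have EF : \sum_(c <- F1) c + \sum_(c <- F2) c = t *: a.
  apply/eqP; rewrite /t !scalerBl -addrA -opprD eq_sym subr_eq eq_sym addrC.
  by rewrite addrACA -E1 -E2 addrC subrK.
have aa0 := dotv_root_gt0 aP.
have t0 : t <= 0.
  have : dotv (t *: a) a <= 0.
    rewrite -EF dotvDl.
    have := sum_simple_filter_dotv_le0 sa S1.
    have := sum_simple_filter_dotv_le0 sa S2; rewrite -/F1 -/F2; lra.
  by rewrite dotvZl; nra.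
have F1nil : F1 = [::].
  case E: F1 => [//|c F]; exfalso.
  have h1 : 0 < dotv (\sum_(c <- F1) c) rho.
    by apply: sum_simple_rho_gt0; [apply: simple_word_filter | rewrite E].
  have h2 := sum_simple_rho_ge0 (simple_word_filter (a := a) S2).
  have h3 : dotv (t *: a) rho <= 0 by rewrite dotvZl; case: sa => [[_ ?] _]; nra.
  by move: h3; rewrite -EF dotvDl -/F2; lra.
rewrite F1nil big_nil addr0 in E1.
have : m1 *: a \in Phi by rewrite -E1.
case: hPhi => _ _ _ /(_ a m1 aP) /[apply] [[]] e.
  by move: ba; rewrite E1 e scale1r eqxx.
by move: (ler0n R (count_mem a L1)); rewrite -/m1 e; lra.
Qed.

Lemma pos_root_conj_simple b : pos b ->
  exists ws a, [/\ sword ws, simple a & b = a *m wordval ws].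
Proof.
have [k] : exists k, (lower_roots b < k)%N by exists (lower_roots b).+1.
elim: k b => // k IH b Hk pb.
have [sb|ns] := classic (simple b); first by exists [::], b; rewrite /= mulmx1.
have [L [SL _ Eb]] := pos_root_sum_simple pb.
have bb0 := dotv_root_gt0 (proj1 pb).
have [c cL cb] : exists2 c, c \in L & 0 < dotv c b.
  apply: NNPP => H; suff : dotv b b <= 0 by rewrite leNgt bb0.
  rewrite {1}Eb dotv_suml big_seq; apply: sumr_le0 => c cL.
  by rewrite leNgt; apply/negP => h; apply: H; exists c.
have sc := SL c cL; have cP := simple_root_in sc.
have bc : b != c by apply: contra_notN ns => /eqP->.
have pb' := simple_refl_pos sc pb bc.
have lt' : dotv (b *m refl c) rho < dotv b rho.
  rewrite refl_row dotvBl dotvZl gtrBl; apply: mulr_gt0; last by case: sc => [[]].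
  by rewrite divr_gt0 ?dotv_root_gt0 // mulr_gt0 // dotvC.
have [ws [a [Sw sa Ea]]] := IH _ (leq_trans (lower_roots_lt (proj1 pb') lt') Hk) pb'.
exists (ws ++ [:: c]), a; split => //.
  by apply: simple_word_cat => //; apply/simple_word_cons.
by rewrite wordval_cat /= mulmx1 mulmxA -Ea -mulmxA reflK ?root_neq0 ?mulmx1.
Qed.

Lemma inW_refl b : b \in Phi -> inW (refl b).
Proof.
have Hpos c : pos c -> inW (refl c).
  move=> /pos_root_conj_simple [ws [a [Sw sa ->]]]; have wW := inW_word Sw.
  rewrite refl_conj; last exact: wordval_orthogonal.
  rewrite -mulmxA.
  exact: inWM (inWT wW) (inW_refl_simpleM sa wW).
by move=> /pos_rootVN [/Hpos|/Hpos]; rewrite ?reflN.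
Qed.

Lemma omit1_cons i a ws : (0 < i)%N -> omit1 i.+1 (a :: ws) = a :: omit1 i ws.
Proof. by case: i. Qed.

Lemma size_omit1 i ws : (0 < i <= size ws)%N -> size (omit1 i ws) = (size ws).-1.
Proof.
move=> /andP[i0 iw]; rewrite /omit1 size_cat size_take size_drop.
by case: ltnP; lia.
Qed.

Lemma omit1_subseq i ws : subseq (omit1 i ws) ws.
Proof.
case: i => [|i]; first by rewrite /omit1 /= take0 drop0 subseq_refl.
rewrite /omit1 /= -[X in subseq _ X](cat_take_drop i ws) cat_subseq //.
by rewrite -[i.+1]add1n -drop_drop drop_subseq.
Qed.

Lemma simple_word_omit1 i ws : sword ws -> sword (omit1 i ws).
Proof. exact/simple_word_subseq/omit1_subseq. Qed.

Lemma exchange_condition ws b : sword ws -> pos b -> dotv (b *m wordval ws) rho < 0 ->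
  exists2 i, (0 < i <= size ws)%N & refl b *m wordval ws = wordval (omit1 i ws).
Proof.
elim: ws b => [|a ws IH] b /=.
  by move=> _ [_ pb]; rewrite mulmx1 ltNge (ltW pb).
move=> /simple_word_cons [sa Sw] pb neg; have aP := simple_root_in sa.
have [/eqP ->|ba] := boolP (b == a).
  by exists 1%N; rewrite // root_reflK // /omit1 /= drop0.
move: neg; rewrite mulmxA => /(IH _ Sw (simple_refl_pos sa pb ba)) [i iw Ei].
exists i.+1; first by move: iw; rewrite /=; lia.
rewrite omit1_cons; last by case/andP: iw.
rewrite /= -Ei refl_conj; last exact/orthogonal_refl/root_neq0.
by rewrite trmx_refl !mulmxA reflK ?root_neq0 // mul1mx.
Qed.

(* The value 0 outside W is never used. *)
Definition len g : nat := epsilon (inhabits 0%N) (length_is Phi rho g).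

Lemma lenP g : inW g -> length_is Phi rho g (len g).
Proof.
move=> [ws [Sw Ew]]; apply: epsilon_spec.
pose P k := exists ws, [/\ sword ws, wordval ws = g & size ws = k].
have [k [[[ws' [S' E' Z']] kmin] _]] : has_unique_least_element le P.
  apply: dec_inh_nat_subset_has_unique_least_element => [k|]; first exact: classic.
  by exists (size ws), ws.
exists k; split; first by exists ws'.
by move=> ws2 S2 E2; apply/ssrnat.leP/kmin; exists ws2.
Qed.

Lemma length_is_len g k : length_is Phi rho g k -> k = len g.
Proof.
move=> Hk; have [[ws1 [S1 [E1 Z1]]] M1] := Hk.
have [[ws2 [S2 [E2 Z2]]] M2] := lenP (ex_intro _ ws1 (conj S1 E1)).
by apply/eqP; rewrite eqn_leq -{1}Z2 -{2}Z1 M1 ?M2.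
Qed.

Lemma len_wordval ws : sword ws -> (len (wordval ws) <= size ws)%N.
Proof. by move=> Sw; have [_] := lenP (inW_word Sw); apply. Qed.

Lemma len_witness g : inW g ->
  exists ws, [/\ sword ws, wordval ws = g & size ws = len g].
Proof. by move=> /lenP [[ws [Sw [Ew Z]]] _]; exists ws. Qed.

Lemma reduced_wordP ws :
  reduced_word Phi rho ws <-> sword ws /\ size ws = len (wordval ws).
Proof.
split=> [[Sw Mw]|[Sw Z]]; split => //.
  have [ws' [S' E' Z']] := len_witness (inW_word Sw).
  by apply/eqP; rewrite eqn_leq len_wordval // andbT -Z' Mw.
by move=> ws' S' E'; rewrite Z -E' len_wordval.
Qed.

Lemma len_refl_simple_le a g : simple a -> inW g -> (len (refl a *m g) <= (len g).+1)%N.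
Proof.
move=> sa gW; have [ws [Sw <- <-]] := len_witness gW.
by rewrite -wordval_cons len_wordval //; apply/simple_word_cons.
Qed.

Lemma len_refl_lt b g : pos b -> inW g -> dotv (b *m g) rho < 0 ->
  (len (refl b *m g) < len g)%N.
Proof.
move=> pb gW neg; have [ws [Sw Ew Z]] := len_witness gW; subst g.
have [i iw ->] := exchange_condition Sw pb neg.
rewrite -Z; apply: leq_ltn_trans (len_wordval (simple_word_omit1 (i := i) Sw)) _.
by rewrite size_omit1 //; case/andP: iw; lia.
Qed.

Lemma len_refl_gt b g : pos b -> inW g -> 0 < dotv (b *m g) rho ->
  (len g < len (refl b *m g))%N.
Proof.
move=> pb gW gt0; have bP := proj1 pb; have bN := root_neq0 bP.
have hW : inW (refl b *m g) by apply: inWM => //; apply: inW_refl.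
have := len_refl_lt pb hW; rewrite root_reflK //; apply.
by rewrite mulmxA refl_self // mulNmx dotvNl oppr_lt0.
Qed.

Lemma len_refl_gt_dotv b g : pos b -> inW g -> (len g < len (refl b *m g))%N ->
  0 < dotv (b *m g) rho.
Proof.
move=> pb gW lt; have := hrho (root_mul_inW gW (proj1 pb)).
rewrite neq_lt => /orP[/(len_refl_lt pb gW)|//].
by rewrite ltnNge (ltnW lt).
Qed.

Lemma len_refl_lt_dotv b g : pos b -> inW g -> (len (refl b *m g) < len g)%N ->
  dotv (b *m g) rho < 0.
Proof.
move=> pb gW lt; have := hrho (root_mul_inW gW (proj1 pb)).
rewrite neq_lt => /orP[//|/(len_refl_gt pb gW)].
by rewrite ltnNge (ltnW lt).
Qed.

Lemma len_refl_simple a g : simple a -> inW g ->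
  len (refl a *m g) = (len g).+1 \/ len g = (len (refl a *m g)).+1.
Proof.
move=> sa gW; have pa := simple_pos sa; have aP := simple_root_in sa.
have := hrho (root_mul_inW gW aP); rewrite neq_lt => /orP[neg|gt0].
  right; apply/eqP; rewrite eqn_leq len_refl_lt // andbT.
  by have := len_refl_simple_le sa (inW_refl_simpleM sa gW); rewrite root_reflK.
by left; apply/eqP; rewrite eqn_leq len_refl_simple_le // len_refl_gt.
Qed.

Local Notation le := (bruhat_le Phi rho).
Local Notation step := (bruhat_step Phi rho).

Lemma bruhat_stepP x y : step x y ->
  [/\ inW x, inW y, (len x < len y)%N & exists2 a, a \in Phi & y = x *m refl a].
Proof.
move=> [a [aP [-> [kx [ky [Hx [Hy lt]]]]]]].
have inW_of k g : length_is Phi rho g k -> inW g by case=> [[ws [Sw [Ew _]]] _]; exists ws.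
split; [exact: inW_of Hx|exact: inW_of Hy| |by exists a].
by rewrite -(length_is_len Hx) -(length_is_len Hy).
Qed.

Lemma bruhat_step_refl x b : inW x -> b \in Phi -> (len x < len (x *m refl b))%N ->
  step x (x *m refl b).
Proof.
move=> xW bP lt; exists b; do 2!split => //.
exists (len x), (len (x *m refl b)); split; first exact: lenP.
by split => //; apply/lenP/inWM/inW_refl.
Qed.

Lemma refl_mulmx_conj x b : inW x -> refl b *m x = x *m refl (b *m x).
Proof.
move=> xW; have [x1 _] := inW_orthogonal xW.
by rewrite refl_conj; [rewrite !mulmxA x1 mul1mx|apply: inW_orthogonal].
Qed.

Lemma bruhat_step_refl_l x b : inW x -> b \in Phi -> (len x < len (refl b *m x))%N ->
  step x (refl b *m x).
Proof.
move=> xW bP; rewrite refl_mulmx_conj //; apply: bruhat_step_refl => //.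
exact: root_mul_inW.
Qed.

Lemma bruhat_step_pos_l x y : step x y -> exists2 b, pos b & y = refl b *m x.
Proof.
move=> /bruhat_stepP [xW yW _ [a aP ->]].
have cP : a *m x^T \in Phi by apply: root_mul_inW => //; apply: inWT.
have E : refl (a *m x^T) *m x = x *m refl a.
  rewrite refl_conj; last exact/inW_orthogonal/inWT.
  by rewrite trmxK -!mulmxA; have [_ ->] := inW_orthogonal xW; rewrite mulmx1.
by case: (pos_rootVN cP) => pc; [exists (a *m x^T)|exists (- (a *m x^T))];
  rewrite ?reflN ?E.
Qed.

Lemma bruhat_lexx x : inW x -> le x x.
Proof. by move=> xW; split => //; apply: rt_refl. Qed.

Lemma bruhat_le_trans x y z : le x y -> le y z -> le x z.
Proof. by move=> [xW xy] [_ yz]; split => //; apply: rt_trans yz. Qed.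

Lemma bruhat_step_le x y : step x y -> le x y.
Proof. by move=> st; split; [case: (bruhat_stepP st)|apply: rt_step]. Qed.

Lemma bruhat_le_inW x y : le x y -> inW x /\ inW y.
Proof.
move=> [xW]; move/(clos_rt_rt1n _ _ _ _) => xy; split => //.
by elim: xy xW => // {}x {}y z /bruhat_stepP[] _ yW _ _ _ /(_ yW).
Qed.

Lemma bruhat_le_len x y : le x y -> x = y \/ (len x < len y)%N.
Proof.
move=> [_]; move/(clos_rt_rt1n _ _ _ _) => xy; elim: xy => [|{}x {}y z st _ IH]; first by left.
right; have [_ _ lt _] := bruhat_stepP st.
by case: IH => [<-|/(ltn_trans lt)].
Qed.

Lemma bruhat_lt_len x y : bruhat_lt Phi rho x y -> (len x < len y)%N.
Proof. by move=> [/bruhat_le_len [] // ->]. Qed.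

Lemma bruhat_lt_refl y b : inW y -> b \in Phi -> (len y < len (y *m refl b))%N ->
  bruhat_lt Phi rho y (y *m refl b).
Proof.
move=> yW bP lt; split; first exact/bruhat_step_le/bruhat_step_refl.
by move=> E; move: lt; rewrite -E ltnn.
Qed.

Lemma bruhat_le_descent a y : simple a -> inW y -> (len (refl a *m y) < len y)%N ->
  le (refl a *m y) y.
Proof.
move=> sa yW lt; have aP := simple_root_in sa.
apply: bruhat_step_le; rewrite -{2}(root_reflK y aP).
by apply: bruhat_step_refl_l => //; [exact: inW_refl_simpleM|rewrite root_reflK].
Qed.

Lemma bruhat_le_ascent a y : simple a -> inW y -> (len y < len (refl a *m y))%N ->
  le y (refl a *m y).
Proof. by move=> sa yW lt; apply/bruhat_step_le/bruhat_step_refl_l/lt/simple_root_in. Qed.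

Lemma bruhat_step_refl_simple y z a : step y z -> simple a ->
  le (refl a *m y) z \/ le (refl a *m y) (refl a *m z).
Proof.
move=> st sa; have aP := simple_root_in sa; have aN := root_neq0 aP.
have [yW zW lt _] := bruhat_stepP st; have [b pb Ez] := bruhat_step_pos_l st.
case: (len_refl_simple sa yW) => E1; last first.
  by left; apply: bruhat_le_trans (bruhat_le_descent sa yW _) (bruhat_step_le st); rewrite E1.
have [/eqP ba|ba] := boolP (b == a).
  by left; rewrite -ba -Ez; apply: bruhat_lexx.
right; apply: bruhat_step_le; have pb' := simple_refl_pos sa pb ba.
have syW := inW_refl_simpleM sa yW.
have -> : refl a *m z = refl (b *m refl a) *m (refl a *m y).
  rewrite Ez refl_conj; last exact: orthogonal_refl.
  by rewrite trmx_refl !mulmxA -(mulmxA _ (refl a) (refl a)) reflK // mulmx1.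
apply: bruhat_step_refl_l => //; first by case: pb'.
apply: len_refl_gt => //.
rewrite mulmxA -(mulmxA b) reflK // mulmx1.
by apply: len_refl_gt_dotv; rewrite -?Ez.
Qed.

Lemma bruhat_le_refl_simple y z a : le y z -> simple a ->
  le (refl a *m y) z \/ le (refl a *m y) (refl a *m z).
Proof.
move=> [yW] + sa; move/(clos_rt_rt1n _ _ _ _) => yz.
elim: yz yW => [{}y|{}y y1 {}z st r IH] yW.
  case: (len_refl_simple sa yW) => E1.
    by right; apply/bruhat_lexx/inW_refl_simpleM.
  by left; apply: bruhat_le_descent => //; rewrite E1.
have [_ y1W _ _] := bruhat_stepP st.
have y1z : le y1 z by split => //; apply: clos_rt1n_rt.
case: (bruhat_step_refl_simple st sa) => H; first by left; apply: bruhat_le_trans H y1z.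
by case: (IH y1W) => H2; [left|right]; apply: bruhat_le_trans H H2.
Qed.

Lemma bruhat_le_lift y z a : le y z -> simple a -> (len z < len (refl a *m z))%N ->
  le (refl a *m y) (refl a *m z).
Proof.
move=> yz sa lt; have [_ zW] := bruhat_le_inW yz.
case: (bruhat_le_refl_simple yz sa) => // H.
exact/(bruhat_le_trans H)/bruhat_le_ascent.
Qed.

Local Notation reduced := (reduced_word Phi rho).

Lemma reduced_word_behead a ws : reduced (a :: ws) ->
  reduced ws /\ len (wordval (a :: ws)) = (len (wordval ws)).+1.
Proof.
move=> /reduced_wordP [/simple_word_cons [sa Sw] Z].
have := len_wordval Sw; have := len_refl_simple_le sa (inW_word Sw).
rewrite -wordval_cons -Z /= => le1 le2.
by split; [apply/reduced_wordP; split => //|]; lia.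
Qed.

Lemma subword_bruhat_le ws us : reduced ws -> subseq us ws -> le (wordval us) (wordval ws).
Proof.
elim: ws us => [|a ws IH] us red.
  by rewrite subseq0 => /eqP->; apply: bruhat_lexx; exists [::].
have [red' len_w] := reduced_word_behead red.
have sa : simple a by case: red => /simple_word_cons [].
have lt : (len (wordval ws) < len (refl a *m wordval ws))%N by rewrite -wordval_cons len_w.
have up : le (wordval ws) (wordval (a :: ws)).
  exact: bruhat_le_ascent sa (inW_word red'.1) lt.
case: us => [|c us] /=.
  by move=> _; apply: bruhat_le_trans up; apply: (IH [::]) => //; exact: sub0seq.
case: eqP => [-> su|_ su]; first by apply: bruhat_le_lift => //; apply: IH.
by apply: bruhat_le_trans up; apply: (IH (c :: us)).
Qed.

Lemma reduced_subseq ws : sword ws ->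
  exists us, [/\ subseq us ws, wordval us = wordval ws & reduced us].
Proof.
elim: ws => [|a ws IH] Sw; first by exists [::].
have [sa Sw'] := (simple_word_cons a ws).1 Sw.
have [us [su Eu /reduced_wordP [Su Zu]]] := IH Sw'.
case: (len_refl_simple sa (inW_word Sw')) => E1.
  exists (a :: us); split; first by rewrite /= eqxx.
    by rewrite !wordval_cons Eu.
  apply/reduced_wordP; split; first exact/simple_word_cons.
  by rewrite wordval_cons Eu E1 /= Zu Eu.
have neg : dotv (a *m wordval us) rho < 0.
  by apply: len_refl_lt_dotv (simple_pos sa) (inW_word Su) _; rewrite Eu E1.
have [i iw Ei] := exchange_condition Su (simple_pos sa) neg.
exists (omit1 i us); split.
- exact/(subseq_trans (omit1_subseq _ _))/(subseq_trans su)/subseq_cons.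
- by rewrite -Ei Eu.
apply/reduced_wordP; split; first exact: simple_word_omit1.
by rewrite -Ei Eu size_omit1 // Zu Eu E1.
Qed.

Lemma bruhat_le_subword x ws : reduced ws -> le x (wordval ws) ->
  exists2 us, subseq us ws & wordval us = x.
Proof.
move=> red [xW]; move/(clos_rt_rtn1 _ _ _ _); move Ew: (wordval ws) => w xw.
elim: xw ws Ew red => [|y z st _ IH] ws Ew red; first by exists ws.
have [yW zW lt _] := bruhat_stepP st; have [b pb Ez] := bruhat_step_pos_l st.
have Ey : y = refl b *m z by rewrite Ez root_reflK //; case: pb.
have neg : dotv (b *m wordval ws) rho < 0.
  by rewrite Ew; apply: len_refl_lt_dotv => //; rewrite -Ey.
have [i _ Ei] := exchange_condition red.1 pb neg.
have [us1 [su1 Eu1 red1]] := reduced_subseq (simple_word_omit1 (i := i) red.1).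
have [|us su <-] := IH us1 _ red1; first by rewrite Eu1 -Ei Ew -Ey.
by exists us => //; apply/(subseq_trans su)/(subseq_trans su1)/omit1_subseq.
Qed.

Lemma bruhat_le_cons x a ws : reduced (a :: ws) -> le x (wordval (a :: ws)) ->
  le x (wordval ws) \/ le (refl a *m x) (wordval ws).
Proof.
move=> red /(bruhat_le_subword red) [us su <-].
have [red' _] := reduced_word_behead red.
have aP : a \in Phi by case: red => /simple_word_cons [/simple_root_in].
case: (subseq_consP su) => [su'|[us' -> su']]; first by left; apply: subword_bruhat_le.
by right; rewrite wordval_cons root_reflK //; apply: subword_bruhat_le.
Qed.

Lemma reduced_word_descent a w : simple a -> inW w -> (len (refl a *m w) < len w)%N ->
  exists2 ws, reduced (a :: ws) & wordval (a :: ws) = w.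
Proof.
move=> sa wW lt; have aP := simple_root_in sa.
have [ws [Sw Ew Z]] := len_witness (inW_refl_simpleM sa wW).
exists ws; last by rewrite wordval_cons Ew root_reflK.
apply/reduced_wordP; split; first exact/simple_word_cons.
rewrite wordval_cons Ew root_reflK //=.
by case: (len_refl_simple sa wW) => E1; move: lt; rewrite Z E1; lia.
Qed.

Lemma bruhat_le_descents x w a : simple a ->
  (len (refl a *m x) < len x)%N -> (len (refl a *m w) < len w)%N ->
  le (refl a *m x) (refl a *m w) <-> le x w.
Proof.
move=> sa ltx ltw; have aP := simple_root_in sa; split => H.
  have [_ /(inW_refl_simpleM sa)] := bruhat_le_inW H; rewrite root_reflK // => wW.
  case: (bruhat_le_refl_simple H sa); rewrite !root_reflK // => H'.
  exact: bruhat_le_trans H' (bruhat_le_descent sa wW ltw).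
have [xW wW] := bruhat_le_inW H.
have [ws red Ew] := reduced_word_descent sa wW ltw.
rewrite -Ew in H *; rewrite wordval_cons root_reflK //.
case: (bruhat_le_cons red H) => // H'.
exact: bruhat_le_trans (bruhat_le_descent sa xW ltx) H'.
Qed.

Lemma bruhat_le_lifting x w a : le x w -> simple a ->
  (len x < len (refl a *m x))%N -> (len (refl a *m w) < len w)%N ->
  le x (refl a *m w) /\ le (refl a *m x) w.
Proof.
move=> H sa ltx ltw; have aP := simple_root_in sa; have [xW wW] := bruhat_le_inW H.
have le_sw : le x (refl a *m w).
  have [ws red Ew] := reduced_word_descent sa wW ltw.
  rewrite -Ew in H *; rewrite wordval_cons root_reflK //.
  case: (bruhat_le_cons red H) => // H'.
  exact: bruhat_le_trans (bruhat_le_ascent sa xW ltx) H'.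
split => //; rewrite -(root_reflK w aP).
by apply: bruhat_le_lift; rewrite ?root_reflK.
Qed.

Lemma is_lambda_uniq x ws l1 l2 :
  is_lambda Phi rho x ws l1 -> is_lambda Phi rho x ws l2 -> l1 = l2.
Proof.
move=> [s1 H1] [s2 H2]; apply: (irr_sorted_eq ltn_trans ltnn s1 s2) => i.
by apply/idP/idP => [/H1/H2|/H2/H1].
Qed.

Lemma mem_map_pred (l : seq nat) i : (i.+1 \in [seq j.-1 | j <- l]) = (i.+2 \in l).
Proof. by apply/mapP/idP => [[[|[|j]] // jl [->]]|il]; last exists i.+2. Qed.

Lemma omit_pos_cons (l : seq nat) a ws : 1%N \notin l ->
  omit_pos l (a :: ws) = a :: omit_pos [seq i.-1 | i <- l] ws.
Proof.
move=> l1; rewrite /omit_pos /= l1.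
have -> : iota 1 (size ws) = map S (iota 0 (size ws)) by exact: (iotaDl 1 0 _).
by rewrite -map_comp; congr (_ :: mask _ _); apply: eq_map => i /=; rewrite mem_map_pred.
Qed.

Lemma sorted_ltn_head_leq (l : seq nat) j : sorted ltn l -> j \in l -> (head 0 l <= j)%N.
Proof.
case: l => //= h t srt; rewrite inE => /orP[/eqP->//|jt].
exact/ltnW/(allP (order_path_min ltn_trans srt)).
Qed.

Lemma sorted_ltn_map_pred (l : seq nat) : sorted ltn l -> (forall j, j \in l -> 0 < j)%N ->
  sorted ltn [seq j.-1 | j <- l].
Proof.
move=> srt l_gt0; rewrite sorted_map.
apply: (@sub_in_sorted _ (fun j => 0 < j)%N) srt; last exact/allP.
by move=> p q /= p0 q0 pq; lia.
Qed.

Section GoodWordShift.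
Variables (x : 'M[R]_n) (a : 'rV[R]_n) (ws : seq 'rV[R]_n) (l : seq nat).
Hypothesis x_le_w : le x (wordval (a :: ws)).
Hypothesis w_reduced : reduced (a :: ws).
Hypothesis lambda_x : is_lambda Phi rho x (a :: ws) l.
Hypothesis head_l : (1 < head 0 l)%N.

Let sa : simple a. Proof. by case: w_reduced => /simple_word_cons []. Qed.
Let aP : a \in Phi. Proof. exact: simple_root_in sa. Qed.
Let Sws : sword ws. Proof. by case: w_reduced => /simple_word_cons []. Qed.
Let xW : inW x. Proof. by case: (bruhat_le_inW x_le_w). Qed.

Let lambda_ge2 j : j \in l -> (2 <= j)%N.
Proof. by case: lambda_x => srt _ /(sorted_ltn_head_leq srt); apply: leq_trans. Qed.

Let tail_reduced : reduced ws. Proof. exact: (reduced_word_behead w_reduced).1. Qed.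
Let len_w : len (wordval (a :: ws)) = (len (wordval ws)).+1.
Proof. exact: (reduced_word_behead w_reduced).2. Qed.

Lemma not_bruhat_le_tail : ~ le x (wordval ws).
Proof.
move=> H; have /lambda_ge2 // : 1%N \in l.
by apply/lambda_x.2; rewrite /omit1 /= drop0.
Qed.

Lemma x_left_descent : (len (refl a *m x) < len x)%N.
Proof.
case: (len_refl_simple sa xW) => E1; last by rewrite E1.
case: not_bruhat_le_tail; rewrite -(root_reflK (wordval ws) aP).
by apply: (bruhat_le_lifting x_le_w sa _ _).1; rewrite ?E1 ?root_reflK ?len_w.
Qed.

Lemma bruhat_le_omit1_refl i : (1 <= i <= size ws)%N ->
  le x (refl a *m wordval (omit1 i ws)) <-> le (refl a *m x) (wordval (omit1 i ws)).
Proof.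
move=> iw; set v := wordval (omit1 i ws).
have vW : inW v := inW_word (simple_word_omit1 Sws).
have v_le : le v (wordval ws) := subword_bruhat_le tail_reduced (omit1_subseq i ws).
case: (len_refl_simple sa vW) => E1.
  rewrite -{2}(root_reflK v aP); apply: iff_sym; apply: bruhat_le_descents sa x_left_descent _.
  by rewrite root_reflK // E1.
split => H.
  apply: bruhat_le_trans (bruhat_le_descent sa xW x_left_descent) _.
  by apply: bruhat_le_trans H (bruhat_le_descent sa vW _); rewrite E1.
case: not_bruhat_le_tail; apply: bruhat_le_trans v_le.
rewrite -(root_reflK x aP); apply: (bruhat_le_lifting H sa _ _).2; last by rewrite E1.
by rewrite root_reflK // x_left_descent.
Qed.

Lemma is_lambda_refl_behead : is_lambda Phi rho (refl a *m x) ws [seq i.-1 | i <- l].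
Proof.
have [srt Hl] := lambda_x; split.
  by apply: sorted_ltn_map_pred => // j /lambda_ge2; apply: leq_trans.
move=> i; split.
  move=> /mapP [[|[|j]] jl ->]; have := lambda_ge2 jl => // _.
  have [jb Hj] := (Hl j.+2).1 jl.
  have jb' : (1 <= j.+1 <= size ws)%N by move: jb => /=; lia.
  by split => //; apply/(bruhat_le_omit1_refl jb'); move: Hj; rewrite omit1_cons.
case: i => [[]|i [ib Hi]] //; rewrite mem_map_pred; apply/Hl.
split; first by move: ib => /=; lia.
by rewrite omit1_cons // wordval_cons; apply/bruhat_le_omit1_refl.
Qed.

Lemma good_word_refl_behead :
  good_word Phi rho x (a :: ws) -> good_word Phi rho (refl a *m x) ws.
Proof.
move=> [l0 [lambda0 Ex]]; exists [seq i.-1 | i <- l].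
split; first exact: is_lambda_refl_behead.
have l1 : 1%N \notin l by apply/negP => /lambda_ge2.
by rewrite Ex (is_lambda_uniq lambda0 lambda_x) omit_pos_cons // wordval_cons root_reflK.
Qed.

Lemma Sxw_refl_behead_sub b : Sxw Phi rho (refl a *m x) (wordval ws) b ->
  Sxw Phi rho x (wordval (a :: ws)) b.
Proof.
move=> [pb [H1 H2]]; split => //; have bP := proj1 pb.
set y := wordval ws *m refl b in H1 H2.
have [_ yW] := bruhat_le_inW H1; have lty := bruhat_lt_len H2.
have Ey : wordval (a :: ws) *m refl b = refl a *m y by rewrite /y wordval_cons mulmxA.
have Ew : wordval (a :: ws) = refl a *m y *m refl b.
  by rewrite -Ey -mulmxA reflK ?root_neq0 // mulmx1.
rewrite Ey.
case: (len_refl_simple sa yW) => E1.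
  split; first by apply/(bruhat_le_descents sa x_left_descent); rewrite ?root_reflK ?E1.
  rewrite [X in bruhat_lt _ _ _ X]Ew; apply: bruhat_lt_refl => //.
    exact: inW_refl_simpleM.
  by rewrite -Ew E1 len_w ltnS.
case: not_bruhat_le_tail; apply: bruhat_le_trans H2.1.
rewrite -(root_reflK x aP); apply: (bruhat_le_lifting H1 sa _ _).2; last by rewrite E1.
by rewrite root_reflK // x_left_descent.
Qed.

Lemma Sxw_refl_behead_sup b : Sxw Phi rho x (wordval (a :: ws)) b ->
  Sxw Phi rho (refl a *m x) (wordval ws) b.
Proof.
move=> [pb [H1 H2]]; split => //; have bP := proj1 pb.
set u := wordval (a :: ws) *m refl b in H1 H2.
have [_ uW] := bruhat_le_inW H1; have ltu := bruhat_lt_len H2.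
have Ey : wordval ws *m refl b = refl a *m u by rewrite /u wordval_cons -mulmxA root_reflK.
have Ew : wordval ws = refl a *m u *m refl b.
  by rewrite -Ey -mulmxA reflK ?root_neq0 // mulmx1.
rewrite Ey.
case: (len_refl_simple sa uW) => E1.
  case: not_bruhat_le_tail; apply: bruhat_le_trans H1 _; rewrite -(root_reflK (wordval ws) aP).
  by apply: (bruhat_le_lifting H2.1 sa _ _).1; rewrite ?E1 ?root_reflK ?len_w.
split; first by apply/(bruhat_le_descents sa x_left_descent) => //; rewrite E1.
rewrite [X in bruhat_lt _ _ _ X]Ew; apply: bruhat_lt_refl => //.
  exact: inW_refl_simpleM.
by move: ltu; rewrite -Ew E1 len_w ltnS.
Qed.

End GoodWordShift.

End RootSystem.

Theorem lemma5p1 (R : realFieldType) (n : nat) (Phi : seq 'rV[R]_n) (rho : 'rV[R]_n)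
  (hPhi : is_root_system Phi) (hrho : regular Phi rho)
  (x : 'M[R]_n) (a : 'rV[R]_n) (ws' : seq 'rV[R]_n) (l : seq nat) :
  bruhat_lt Phi rho x (wordval (a :: ws')) ->
  reduced_word Phi rho (a :: ws') ->
  good_word Phi rho x (a :: ws') ->
  is_lambda Phi rho x (a :: ws') l ->
  (1 < head 0 l)%N ->
  [/\ ~ bruhat_le Phi rho x (refl a *m wordval (a :: ws')),
      (forall b, Sxw Phi rho (refl a *m x) (refl a *m wordval (a :: ws')) b
                 <-> Sxw Phi rho x (wordval (a :: ws')) b),
      reduced_word Phi rho ws',
      good_word Phi rho (refl a *m x) ws' &
      is_lambda Phi rho (refl a *m x) ws' [seq i.-1 | i <- l]].
Proof.
move=> [x_le_w _] w_reduced good lambda_x head_l.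
have aP : a \in Phi by case: w_reduced => /simple_word_cons [/simple_root_in].
have -> : refl a *m wordval (a :: ws') = wordval ws'.
  by rewrite wordval_cons (root_reflK hPhi).
split.
- exact: not_bruhat_le_tail lambda_x head_l.
- move=> b; split => H.
    exact: (Sxw_refl_behead_sub hPhi hrho x_le_w w_reduced lambda_x head_l H).
  exact: (Sxw_refl_behead_sup hPhi hrho x_le_w w_reduced lambda_x head_l H).
- exact: (reduced_word_behead w_reduced).1.
- exact: (good_word_refl_behead hPhi hrho x_le_w w_reduced lambda_x head_l good).
- exact: (is_lambda_refl_behead hPhi hrho x_le_w w_reduced lambda_x head_l).
Qed.
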